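(* For $n\geqslant1$, $m\geqslant0$, let $\mathfrak{g}_{n,m}$ be the number of inversion sequences of length $n$ avoiding both $010$ and $120$ with maximum value $m$ (so $\mathfrak{g}_{n,0}=1$). Then for all $n\geqslant 1$ and $m\geqslant1$, $$\mathfrak{g}_{n,m}=\sum_{p=m+1}^{n}\sum_{j=0}^{m-1}\mathfrak{g}_{p-1,j}\cdot\mathfrak{e}_{n-p,\,m-j},$$ where $\mathfrak{e}_{a,b}$ is the number of words of length $a$ over an alphabet $\{1,\dots,b\}$ avoiding $010$ and $120$ (with $\mathfrak{e}_{0,b}=1$, counting the empty word).
   Context: An inversion sequence of length $n$ is a sequence $(\sigma_1,\dots,\sigma_n)$ of integers with $0\leqslant\sigma_i<i$. A sequence contains a pattern $p$ if some subsequence is order-isomorphic to $p$; otherwise it avoids $p$. Avoiding $010$: no $i<j<l$ with $\sigma_i=\sigma_l<\sigma_j$. Avoiding $120$: no $i<j<l$ with $\sigma_l<\sigma_i<\sigma_j$. *)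

From mathcomp Require Import all_boot.
Set Implicit Arguments. Unset Strict Implicit. Unset Printing Implicit Defensive.

(* s is an inversion sequence: (1-indexed) 0 <= sigma_i < i. *)
Definition is_inv_seq (s : seq nat) : bool :=
  [forall i : 'I_(size s), nth 0 s i < i.+1].

Definition avoids010 (s : seq nat) : bool :=
  [forall i : 'I_(size s), forall j : 'I_(size s), forall l : 'I_(size s),
     ((i < j) && (j < l)) ==>
     ~~ ((nth 0 s i == nth 0 s l) && (nth 0 s l < nth 0 s j))].

Definition avoids120 (s : seq nat) : bool :=
  [forall i : 'I_(size s), forall j : 'I_(size s), forall l : 'I_(size s),
     ((i < j) && (j < l)) ==>
     ~~ ((nth 0 s l < nth 0 s i) && (nth 0 s i < nth 0 s j))].

Definition seq_max (s : seq nat) : nat := foldr maxn 0 s.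

(* g n m : number of inversion sequences of length n avoiding 010 and 120
   with maximum value m (entries of an inversion sequence of length n lie in 'I_n). *)
Definition g_count (n m : nat) : nat :=
  #|[set t : n.-tuple 'I_n |
      let s := map (@nat_of_ord n) t in
      [&& is_inv_seq s, avoids010 s, avoids120 s & seq_max s == m]]|.

(* e a b : number of words of length a over a b-letter alphabet avoiding 010
   and 120.  The alphabet is {0,...,b-1} instead of {1,...,b}; pattern
   avoidance is invariant under this order-preserving relabelling. *)
Definition e_count (a b : nat) : nat :=
  #|[set t : a.-tuple 'I_b |
      let s := map (@nat_of_ord b) t in avoids010 s && avoids120 s]|.

From mathcomp Require Import all_boot zify.
Set Implicit Arguments. Unset Strict Implicit. Unset Printing Implicit Defensive.

(* Let s be such a sequence of length n and let p-1 be the (0-based) position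
   of the first occurrence of its maximum m, so that s = u ++ m :: v with
   |u| = p-1 >= m by the inversion condition.  Let j < m be the maximum of u.
   Then u is itself a 010/120-avoiding inversion sequence with maximum j, and
   every entry y of v satisfies j < y <= m: y = j would give an occurrence
   j m j of 010, and y < j an occurrence j m y of 120.  Shifting v down by
   j+1 gives an arbitrary 010/120-avoiding word over m-j letters.
   Conversely every such triple (u, j, v) glues to a valid s, because both
   patterns only have occurrences a b c with c <= a < b, and these cannot
   straddle the blocks u, m, v. *)

Fixpoint words (n b : nat) : seq (seq nat) :=
  if n is n'.+1 then [seq x :: w | x <- iota 0 b, w <- words n' b] else [:: [::]].

Lemma mem_words n b s : (s \in words n b) = (size s == n) && all (fun x => x < b) s.
Proof.
elim: n s => [|n IH] [|x s] //=.
- by apply/negbTE/allpairsPdep => -[x' [w' [_ _]]].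
- apply/allpairsPdep/idP.
  + case=> [x' [w' [Hx Hw [-> ->]]]]; move: Hw; rewrite IH mem_iota in Hx *.
    by case/andP=> /eqP-> ->; rewrite eqxx andbT /=; lia.
  + case/and3P=> Hs Hx Ha; exists x, s; split=> //; first by rewrite mem_iota; lia.
    by rewrite IH -eqSS Hs.
Qed.

Lemma uniq_words n b : uniq (words n b).
Proof.
elim: n => [|n IH] //=; apply: allpairs_uniq_dep => //; first exact: iota_uniq.
by move=> [x1 w1] [x2 w2] _ _ /= [-> ->].
Qed.

Lemma map_val_pmap_insub b (s : seq nat) : all (fun x => x < b) s ->
  map (@nat_of_ord b) (pmap insub s) = s.
Proof. by elim: s => //= x s IH /andP[Hx Hs]; rewrite insubT /= IH. Qed.

Lemma card_tuples_words n b (P : pred (seq nat)) :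
  #|[set t : n.-tuple 'I_b | P (map (@nat_of_ord b) t)]| = count P (words n b).
Proof.
rewrite cardsE cardE /enum_mem size_filter.
rewrite (eq_count (a2 := preim (fun t : n.-tuple 'I_b => map (@nat_of_ord b) t) P)) //.
rewrite -count_map; apply/permP; apply: uniq_perm.
- rewrite map_inj_uniq -?enumT ?enum_uniq // => t1 t2 E.
  exact/val_inj/(inj_map val_inj E).
- exact: uniq_words.
- move=> s; rewrite mem_words; apply/mapP/idP.
  + case=> t _ ->; rewrite size_map size_tuple eqxx /=.
    by apply/allP=> x /mapP[y _ ->].
  + case/andP=> /eqP Hs Ha.
    have Hsz : size (pmap (@insub _ _ 'I_b) s) == n.
      by rewrite -(size_map (@nat_of_ord b)) map_val_pmap_insub // Hs.
    by exists (Tuple Hsz); rewrite ?map_val_pmap_insub // -enumT mem_enum.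
Qed.

Lemma count_sum (T : Type) (P : pred T) (L : seq T) : count P L = \sum_(x <- L) P x.
Proof. by elim: L => [|x L IH]; rewrite ?big_nil ?big_cons //= IH. Qed.

Lemma sum_iota_indicator lo k x : lo <= x < lo + k -> \sum_(p <- iota lo k) (p == x) = 1.
Proof.
move=> Hx; rewrite -(count_sum (pred1 x)) count_uniq_mem ?iota_uniq //.
by rewrite mem_iota Hx.
Qed.

Lemma count_words_cons n b (P : pred (seq nat)) :
  count P (words n.+1 b) = \sum_(x <- iota 0 b) count (fun w => P (x :: w)) (words n b).
Proof.
rewrite /= count_flatten sumnE !big_map; apply: eq_bigr => x _; exact: count_map.
Qed.

Lemma count_words_cat a k N (P Q : pred (seq nat)) :
  count (fun s => P (take a s) && Q (drop a s)) (words (a + k) N) =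
  count P (words a N) * count Q (words k N).
Proof.
elim: a P => [|a IH] P.
  under eq_count => s do rewrite take0 drop0.
  by rewrite /= addn0; case: (P [::]); rewrite ?mul1n ?mul0n //; elim: (words k N).
rewrite addSn !count_words_cons big_distrl; apply: eq_bigr => x _ /=.
exact: (IH (fun u => P (x :: u))).
Qed.

Lemma count_words_head c N m (B : pred (seq nat)) : m < N ->
  count (fun w => (head 0 w == m) && B (behead w)) (words c.+1 N) = count B (words c N).
Proof.
move=> HmN; rewrite count_words_cons.
transitivity (\sum_(x <- iota 0 N) (x == m) * count B (words c N)).
  by apply: eq_bigr => x _ /=; case: (x == m); rewrite ?mul1n ?mul0n ?count_pred0.
by rewrite -big_distrl /= sum_iota_indicator ?mul1n.
Qed.

Lemma count_words_window c N k b (P : pred (seq nat)) : k + b <= N ->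
  count (fun v => all (fun x => k <= x < k + b) v && P v) (words c N) =
  count (fun v => P (map (addn k) v)) (words c b).
Proof.
move=> kbN.
transitivity (count P [seq v <- words c N | all (fun x => k <= x < k + b) v]).
  by rewrite count_filter; apply: eq_count => v /=; rewrite andbC.
transitivity (count P (map (map (addn k)) (words c b))); last by rewrite count_map.
apply/permP; apply: uniq_perm.
- exact/filter_uniq/uniq_words.
- by rewrite map_inj_uniq ?uniq_words //; apply/inj_map/addnI.
move=> s; rewrite mem_filter mem_words; apply/idP/mapP.
- case/and3P=> /allP Hw Hs /allP HN; exists (map (subn^~ k) s).
    rewrite mem_words size_map Hs; apply/allP => _ /mapP[x /Hw Hx ->]; lia.
  rewrite -map_comp map_id_in // => x /Hw /= Hx; lia.
- case=> t; rewrite mem_words => /andP[Ht /allP Hb] ->.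
  rewrite size_map Ht /=; apply/andP; split; apply/allP => _ /mapP[x /Hb Hx ->]; lia.
Qed.

(* The definitions avoids010/avoids120 of the statement are the instances
   for pat010 and pat120 below. *)
Definition avoids (Q : nat -> nat -> nat -> bool) (s : seq nat) : bool :=
  [forall i : 'I_(size s), forall j : 'I_(size s), forall l : 'I_(size s),
     ((i < j) && (j < l)) ==> ~~ Q (nth 0 s i) (nth 0 s j) (nth 0 s l)].

Definition pat010 (a b c : nat) : bool := (a == c) && (c < b).
Definition pat120 (a b c : nat) : bool := (c < a) && (a < b).

Lemma avoidsP Q s : reflect (forall i j l, i < j -> j < l -> l < size s ->
   ~~ Q (nth 0 s i) (nth 0 s j) (nth 0 s l)) (avoids Q s).
Proof.
apply: (iffP idP).
- move=> H i j l ij jl ls.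
  move: H => /forallP/(_ (Ordinal (ltn_trans ij (ltn_trans jl ls)))).
  move=> /forallP/(_ (Ordinal (ltn_trans jl ls)))/forallP/(_ (Ordinal ls)).
  by rewrite /= ij jl.
- move=> H; apply/forallP=> i; apply/forallP=> j; apply/forallP=> l.
  by apply/implyP=> /andP[ij jl]; apply: H.
Qed.

Lemma nth_cat_addl (u w : seq nat) k : nth 0 (u ++ w) (size u + k) = nth 0 w k.
Proof. by rewrite nth_cat ltnNge leq_addr addKn. Qed.

Lemma avoids_catl Q u w : avoids Q (u ++ w) -> avoids Q u.
Proof.
move/avoidsP=> H; apply/avoidsP=> i j l ij jl lu.
by have := H i j l ij jl; rewrite size_cat !nth_cat !ifT; [apply; lia | lia ..].
Qed.

Lemma avoids_catr Q u w : avoids Q (u ++ w) -> avoids Q w.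
Proof.
move/avoidsP=> H; apply/avoidsP=> i j l.
have := H (size u + i) (size u + j) (size u + l).
by rewrite size_cat !nth_cat_addl !ltn_add2l.
Qed.

Lemma avoids_cat Q u w : avoids Q u -> avoids Q w ->
  (forall a b c, a \in u -> b \in u ++ w -> c \in w -> ~~ Q a b c) ->
  avoids Q (u ++ w).
Proof.
move=> /avoidsP Hu /avoidsP Hw Hx; apply/avoidsP=> i j l ij jl; rewrite size_cat => ls.
case: (ltnP l (size u)) => Hl.
  by rewrite !nth_cat !ifT; [apply: Hu | lia ..].
case: (ltnP i (size u)) => Hi.
  have js : j < size (u ++ w) by rewrite size_cat; lia.
  have lw : l - size u < size w by lia.
  apply: Hx; [by rewrite nth_cat Hi mem_nth | exact: mem_nth |].
  by rewrite nth_cat ifF ?mem_nth //; lia.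
by rewrite !nth_cat !ifF; [apply: Hw | lia ..]; lia.
Qed.

Lemma avoids_pivot Q u b v a c :
  avoids Q (u ++ b :: v) -> a \in u -> c \in v -> ~~ Q a b c.
Proof.
move=> /avoidsP H au cv.
have iu : index a u < size u by rewrite index_mem.
have kv : index c v < size v by rewrite index_mem.
have := H (index a u) (size u) (size u + (index c v).+1).
rewrite nth_cat iu nth_index // nth_cat ltnn subnn nth_cat_addl /= nth_index //.
apply=> //; first by rewrite addnS ltnS leq_addr.
by rewrite size_cat /= ltn_add2l ltnS.
Qed.

Lemma avoids_shift Q k s : (forall a b c, Q (k + a) (k + b) (k + c) = Q a b c) ->
  avoids Q (map (addn k) s) = avoids Q s.
Proof.
move=> HQ; apply/avoidsP/avoidsP; rewrite size_map => H i j l ij jl ls.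
- by have := H i j l ij jl ls; rewrite !(nth_map 0) ?HQ //; lia.
- by rewrite !(nth_map 0) ?HQ; [exact: H| lia ..].
Qed.

Definition middle_peak (Q : nat -> nat -> nat -> bool) : Prop :=
  forall a b c, Q a b c -> c <= a < b.

Lemma middle_peak010 : middle_peak pat010.
Proof. by move=> a b c /andP[/eqP-> lt_cb]; rewrite leqnn. Qed.

Lemma middle_peak120 : middle_peak pat120.
Proof. by move=> a b c /andP[/ltnW-> ->]. Qed.

Lemma avoids_pivot_cat Q u m v j : middle_peak Q ->
  avoids Q u -> avoids Q v -> all (fun y => y <= j) u -> j < m ->
  all (fun y => j < y <= m) v -> avoids Q (u ++ m :: v).
Proof.
move=> peakQ Au Av /allP Hu jm /allP Hv.
have notQ a b c : (a < c) || (b <= a) -> ~~ Q a b c.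
  by move=> H; apply/negP => /peakQ; lia.
apply: avoids_cat => //.
  rewrite -cat1s; apply: avoids_cat => //.
    by apply/avoidsP => i j' l /=; lia.
  move=> a b c; rewrite mem_seq1 => /eqP -> Hb _; apply: notQ.
  by move: Hb; rewrite /= inE => /orP[/eqP -> //|/Hv]; lia.
move=> a b c /Hu Ha _; rewrite inE => /orP[/eqP ->|/Hv Hc]; apply: notQ; lia.
Qed.

Lemma is_invP s : reflect (forall i, i < size s -> nth 0 s i <= i) (is_inv_seq s).
Proof.
apply: (iffP forallP) => [H i lt_is | H i]; first exact: (H (Ordinal lt_is)).
exact: H.
Qed.

Lemma inv_catl u w : is_inv_seq (u ++ w) -> is_inv_seq u.
Proof.
move/is_invP=> H; apply/is_invP=> i lt_iu.
by have := H i; rewrite size_cat nth_cat lt_iu; apply; apply: ltn_addr.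
Qed.

Lemma inv_cat u w : is_inv_seq u -> all (fun x => x <= size u) w -> is_inv_seq (u ++ w).
Proof.
move=> /is_invP Hu /allP Hw; apply/is_invP=> i; rewrite size_cat nth_cat.
case: ifP => Hi _; first exact: Hu.
have : nth 0 w (i - size u) <= size u.
  case: (ltnP (i - size u) (size w)) => H; first by apply/Hw/mem_nth.
  by rewrite nth_default.
lia.
Qed.

Lemma inv_all s : is_inv_seq s -> all (fun x => x < size s) s.
Proof.
by move/is_invP=> H; apply/(all_nthP 0) => i lt_is; apply: leq_ltn_trans (H i lt_is) lt_is.
Qed.

Lemma seq_max_leq s k : (seq_max s <= k) = all (fun x => x <= k) s.
Proof. by elim: s => //= x s IH; rewrite geq_max IH. Qed.

Lemma leq_seq_max s x : x \in s -> x <= seq_max s.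
Proof. by move=> xs; move: (leqnn (seq_max s)); rewrite seq_max_leq => /allP; apply. Qed.

Lemma seq_max_mem s : s != [::] -> seq_max s \in s.
Proof.
elim: s => // x [|y s] IH _; first by rewrite /seq_max /= maxn0 mem_head.
rewrite /seq_max /= -/(seq_max (y :: s)) inE.
case/orP: (leq_total x (seq_max (y :: s))) => H.
  by rewrite (maxn_idPr H) IH ?orbT.
by rewrite (maxn_idPl H) eqxx.
Qed.

Lemma seq_max_eq s m : m \in s -> all (fun x => x <= m) s -> seq_max s = m.
Proof. by move=> ms all_le; apply/eqP; rewrite eqn_leq seq_max_leq all_le leq_seq_max. Qed.

Lemma seq_max_lt u m : u != [::] -> m \notin u -> all (fun x => x <= m) u -> seq_max u < m.
Proof.
move=> u0 mu all_le; rewrite ltn_neqAle seq_max_leq all_le andbT.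
by apply: contraNneq mu => <-; apply: seq_max_mem.
Qed.

Definition avoids_both (s : seq nat) : bool := avoids pat010 s && avoids pat120 s.

Definition g_seq (m : nat) (s : seq nat) : bool :=
  [&& is_inv_seq s, avoids pat010 s, avoids pat120 s & seq_max s == m].

Definition upper_tail (m j : nat) (v : seq nat) : bool :=
  all (fun y => j < y <= m) v && avoids_both v.

Definition max_then_tail (m j : nat) (w : seq nat) : bool :=
  (head 0 w == m) && upper_tail m j (behead w).

Lemma g_seq_join m j u v : j < m -> m <= size u ->
  g_seq j u -> upper_tail m j v -> g_seq m (u ++ m :: v).
Proof.
move=> jm mu /and4P[iu a1u a2u /eqP uj] /andP[tail /andP[a1v a2v]].
have le_u : all (fun y => y <= j) u by rewrite -seq_max_leq uj.
have le_v : all (fun y => y <= m) v by apply/allP => y /(allP tail) /andP[].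
apply/and4P; split.
- by apply: inv_cat => //=; rewrite mu; apply/allP => y /(allP le_v) /leq_trans; apply.
- exact: avoids_pivot_cat middle_peak010 a1u a1v le_u jm tail.
- exact: avoids_pivot_cat middle_peak120 a2u a2v le_u jm tail.
- apply/eqP/seq_max_eq; first by rewrite mem_cat mem_head orbT.
  rewrite all_cat /= leqnn le_v !andbT.
  by apply/allP => y /(allP le_u) /leq_ltn_trans /(_ jm) /ltnW.
Qed.

Lemma g_seq_split m u v : u != [::] -> m \notin u -> g_seq m (u ++ m :: v) ->
  g_seq (seq_max u) u && upper_tail m (seq_max u) v.
Proof.
move=> u0 mu /and4P[inv a1 a2 /eqP sm].
have : all (fun y => y <= m) (u ++ m :: v) by rewrite -seq_max_leq sm.
rewrite all_cat /= => /and3P[le_u _ le_v].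
set j := seq_max u.
have jm : j < m := seq_max_lt u0 mu le_u.
have ju : j \in u := seq_max_mem u0.
rewrite /g_seq (inv_catl inv) (avoids_catl a1) (avoids_catl a2) eqxx /=.
rewrite /upper_tail /avoids_both.
rewrite (avoids_catr (u := [:: m]) (avoids_catr a1)).
rewrite (avoids_catr (u := [:: m]) (avoids_catr a2)).
rewrite !andbT; apply/allP => y yv; rewrite (allP le_v y yv) andbT ltnNge leq_eqVlt.
apply/negP => /orP[/eqP yj | yj].
- by have := avoids_pivot a1 ju yv; rewrite /pat010 yj eqxx jm.
- by have := avoids_pivot a2 ju yv; rewrite /pat120 yj jm.
Qed.

Lemma split_at_first_max m j u x v : m <= size u -> j < m ->
  g_seq j u && ((x == m) && upper_tail m j v) =
  [&& g_seq m (u ++ x :: v), size u == index m (u ++ x :: v) & j == seq_max u].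
Proof.
move=> mu jm; apply/idP/idP.
- case/and3P=> gu /eqP xm tail; rewrite xm.
  have /and4P[_ _ _ /eqP uj] := gu.
  have m_notin_u : m \notin u by apply/negP => /leq_seq_max; rewrite uj leqNgt jm.
  by rewrite (g_seq_join jm mu gu tail) index_cat (negbTE m_notin_u) /= eqxx addn0 uj !eqxx.
case/and3P=> gs /eqP idx /eqP ju.
have m_notin_u : m \notin u.
  apply/negP => m_in_u; move: idx; rewrite index_cat m_in_u => idx.
  by rewrite -index_mem -idx ltnn in m_in_u.
move: idx; rewrite index_cat (negbTE m_notin_u) -{1}[size u]addn0 => /eqP.
rewrite eqn_add2l /=; case: (x =P m) => [xm _ | //]; rewrite xm in gs.
have u0 : u != [::] by rewrite -size_eq0 -lt0n; apply: leq_trans mu; apply: leq_ltn_trans jm.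
by have := g_seq_split u0 m_notin_u gs; rewrite -ju.
Qed.

Lemma g_seq_bounds m s : 0 < m -> g_seq m s ->
  m <= index m s < size s /\ seq_max (take (index m s) s) < m.
Proof.
move=> m0 /and4P[inv _ _ /eqP sm].
have s0 : s != [::] by apply/eqP => s0; move: sm m0; rewrite s0 => <-.
have idx : index m s < size s by rewrite index_mem -sm seq_max_mem.
have mi : m <= index m s by move/is_invP: inv => /(_ _ idx); rewrite nth_index // -index_mem.
split; first by rewrite mi idx.
apply: seq_max_lt.
- by rewrite -size_eq0 size_take idx -lt0n (leq_trans m0 mi).
- by apply/negP => /index_ltn; rewrite ltnn.
- by apply/allP => y /mem_take ys; rewrite -sm leq_seq_max.
Qed.

Lemma sum_ord_indicator m J : J < m -> \sum_(j < m) (j == J :> nat) = 1.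
Proof.
move=> Jm; rewrite -(big_mkord xpredT (fun j => (j == J : nat))) /index_iota subn0.
by rewrite sum_iota_indicator.
Qed.

(* Pointwise form of the recurrence: a sequence with maximum m >= 1 admits
   exactly one admissible cut (p, j), and any other sequence admits none. *)
Lemma g_seq_indicator n m s : 0 < m -> size s = n ->
  (g_seq m s : nat) = \sum_(m.+1 <= p < n.+1) \sum_(j < m)
     (g_seq j (take p.-1 s) && max_then_tail m j (drop p.-1 s) : nat).
Proof.
move=> m0 sn.
have split_eq p (j : 'I_m) : m.+1 <= p < n.+1 ->
    g_seq j (take p.-1 s) && max_then_tail m j (drop p.-1 s) =
    [&& g_seq m s, p.-1 == index m s & j == seq_max (take p.-1 s) :> nat].
  move=> /andP[mp pn]; have ps : p.-1 < size s by rewrite sn; case: p mp pn.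
  have size_u : size (take p.-1 s) = p.-1 by rewrite size_take ps.
  have Es := cat_take_drop p.-1 s; rewrite (drop_nth 0 ps) in Es *.
  rewrite /max_then_tail /= split_at_first_max ?size_u ?Es //.
  by case: p mp {pn ps size_u Es}.
rewrite (eq_big_nat _ _ (F2 := fun p => \sum_(j < m)
    ([&& g_seq m s, p.-1 == index m s & j == seq_max (take p.-1 s) :> nat] : nat)));
  last first.
  by move=> p Hp; apply: eq_bigr => j _; rewrite split_eq.
case gs: (g_seq m s); last by rewrite big1 // => p _; rewrite big1.
have [/andP[mi lt_is] max_lt] := g_seq_bounds m0 gs.
rewrite /= (eq_big_nat _ _ (F2 := fun p => (p == (index m s).+1 : nat))).
  have ms : m <= size s := leq_trans mi (ltnW lt_is).
  by rewrite sum_iota_indicator // subnKC -sn ?ltnS ?mi ?lt_is.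
move=> p /andP[mp _]; rewrite -eqSS prednK ?(leq_trans _ mp) //.
by case: eqP => [-> | _] /=; [rewrite sum_ord_indicator | rewrite big1].
Qed.

Lemma g_count_words n m : g_count n m = count (g_seq m) (words n n).
Proof. exact: card_tuples_words. Qed.

Lemma e_count_words a b : e_count a b = count avoids_both (words a b).
Proof. exact: card_tuples_words. Qed.

Lemma avoids_both_shift k v : avoids_both (map (addn k) v) = avoids_both v.
Proof.
by rewrite /avoids_both !avoids_shift // => a b c;
  rewrite /pat010 /pat120 ?eqn_add2l !ltn_add2l.
Qed.

(* Prefixes: inversion sequences of length k have letters below k, so the
   size N >= k of the ambient alphabet is irrelevant. *)
Lemma count_prefix j k N : k <= N -> count (g_seq j) (words k N) = g_count k j.
Proof.
move=> kN; rewrite g_count_words.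
transitivity (count (fun v => all (fun x => 0 <= x < 0 + k) v && g_seq j v) (words k N)).
  apply: eq_in_count => v; rewrite mem_words => /andP[/eqP vk _].
  case gv: (g_seq j v); rewrite ?andbF ?andbT //.
  have /and4P[inv _ _ _] := gv; rewrite add0n -vk.
  by apply/esym/allP => x /(allP (inv_all inv)).
by rewrite count_words_window //; apply: eq_count => v /=; rewrite (eq_map add0n) map_id.
Qed.

(* Suffixes: the first letter is m and the rest is a shifted word over the
   m - j letters j+1, ..., m. *)
Lemma count_max_tail m j c N : j < m < N ->
  count (max_then_tail m j) (words c.+1 N) = e_count c (m - j).
Proof.
move=> /andP[jm mN]; rewrite count_words_head // e_count_words.
have window : j.+1 + (m - j) = m.+1 by rewrite addSn subnKC // ltnW.
transitivity (count (fun v => all (fun x => j.+1 <= x < j.+1 + (m - j)) v && avoids_both v)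
                    (words c N)).
  by apply: eq_count => v; rewrite /upper_tail window.
by rewrite count_words_window ?window //; apply: eq_count => v; apply: avoids_both_shift.
Qed.

(* Summing g_seq_indicator over all sequences and splitting each word at the
   cut position with the product rule. *)
Theorem mainTheorem7 (n m : nat) : 1 <= n -> 1 <= m ->
  g_count n m =
  \sum_(m.+1 <= p < n.+1) \sum_(j < m) g_count p.-1 j * e_count (n - p) (m - j).
Proof.
move=> _ m0; rewrite g_count_words count_sum.
transitivity (\sum_(s <- words n n) \sum_(m.+1 <= p < n.+1) \sum_(j < m)
    (g_seq j (take p.-1 s) && max_then_tail m j (drop p.-1 s) : nat)).
  by apply: eq_big_seq => s; rewrite mem_words => /andP[/eqP sn _]; apply: g_seq_indicator.
rewrite exchange_big; apply: eq_big_nat => p /andP[mp pn].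
rewrite exchange_big; apply: eq_bigr => j _; rewrite -count_sum.
have -> : words n n = words (p.-1 + (n - p).+1) n by congr words; case: p mp pn; lia.
rewrite count_words_cat count_prefix ?count_max_tail //; last by case: p mp pn; lia.
by rewrite ltn_ord; apply: leq_trans mp _.
Qed.
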